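(* Let $\mathcal S$ be a (possibly infinite) set of curves in $\mathbb C^2$, each of degree at most $d$, and suppose that $\bigcap_{C\in\mathcal S}C$ contains a set $I$ with $|I|>d^2$. Then there is a curve $C_0$ with $C_0\subset\bigcap_{C\in\mathcal S}C$ and $|C_0\cap I|\geq |I|-(d-1)^2$.
   Context: A curve in $\mathbb C^2$ is the zero set of a polynomial in $\mathbb C[x,y]\setminus\mathbb C$; its degree is the minimum degree of a defining polynomial. *)

From mathcomp Require Import all_boot all_algebra.
From mathcomp Require Import complex.
From mathcomp Require Import Rstruct.
From mathcomp Require Import mpoly.
Set Implicit Arguments. Unset Strict Implicit. Unset Printing Implicit Defensive.
Import GRing.Theory Num.Theory.
Local Open Scope ring_scope.

Definition CC : numClosedFieldType := complex Rdefinitions.R.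

Definition pt := (CC * CC)%type.

Definition ev (p : {mpoly CC[2]}) (z : pt) : CC :=
  p.@[fun i : 'I_2 => if i == 0 :> nat then z.1 else z.2].

Definition zero_set (p : {mpoly CC[2]}) : pt -> Prop := fun z => ev p z = 0.

Definition nonconst (p : {mpoly CC[2]}) : Prop := forall c : CC, p <> c%:MP.

(* Total degree of a polynomial (msize p = 1 + total degree, 0 for p = 0). *)
Definition tdeg (p : {mpoly CC[2]}) : nat := (msize p).-1.

(* Z is a curve of degree at most d: Z is the zero set of a nonconstant
   polynomial, and the minimal degree of a defining polynomial is <= d,
   i.e. some defining polynomial has total degree <= d. *)
Definition curve (Z : pt -> Prop) : Prop :=
  exists p, nonconst p /\ (forall z, Z z <-> zero_set p z).

Definition curve_deg_le (Z : pt -> Prop) (d : nat) : Prop :=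
  exists p, nonconst p /\ (forall z, Z z <-> zero_set p z) /\ (tdeg p <= d)%N.

(* Let [D] be a common divisor, of maximal total degree [k], of the defining
   polynomials [h] of the curves in [S]. The cofactors [h / D] have no common
   factor, so by a Bezout-type bound the points of [I] off the curve [D = 0]
   number at most [(d - k)^2]; as [|I| > d^2] this forces [k >= 1], and
   [D = 0] is the curve [C0]. The Bezout-type bound (a polynomial of degree
   [<= a] and a family of polynomials of degree [<= b] without common factor
   have at most [a b] common zeros) follows by induction on [a] from the case
   of two coprime polynomials, which is a resultant computation after a shear
   that separates the abscissas of the common zeros. *)

From mathcomp Require Import all_boot all_algebra.
From mathcomp Require Import complex Rstruct mpoly.
From mathcomp Require Import perm zify ring.
From Stdlib Require Import Classical.
Set Implicit Arguments. Unset Strict Implicit. Unset Printing Implicit Defensive.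
Import GRing.Theory Num.Theory.
Local Open Scope ring_scope.

Local Notation evalx a := (map_poly (horner_eval a)).

Section PolyOverPoly.

Variable F : closedFieldType.
Implicit Types (c : {poly F}) (A B g w : {poly {poly F}}).

Definition primitive g := forall a : F, evalx a g != 0.

Lemma evalxC a c : evalx a c%:P = c.[a]%:P.
Proof. by rewrite map_polyC /= horner_evalE. Qed.

Lemma evalx_eq0_factor w a : evalx a w = 0 -> exists w', w = ('X - a%:P)%:P * w'.
Proof.
move=> wa0; exists (\poly_(i < size w) (w`_i %/ ('X - a%:P))).
apply/polyP => i; rewrite coefCM coef_poly.
case: ltnP => hi; last by rewrite mulr0 nth_default.
have : (evalx a w)`_i = 0 by rewrite wa0 coef0.
rewrite coef_map /= horner_evalE => wia0.
by rewrite mulrC divpK // dvdp_XsubCl /root wia0.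
Qed.

(* Gauss's lemma: since [F] is algebraically closed, [c] splits into linear
   factors, and each of them can be cancelled against [w] because [g] is
   primitive. *)
Lemma primitive_dvd c A w g :
  c != 0 -> primitive g -> c%:P * A = w * g -> exists A', A = A' * g.
Proof.
move=> + pg; have [n] := ubnP (size c); elim: n c A w => // n IH c A w.
rewrite ltnS => le_cn c0 e.
have [/closed_rootP [a ca]|/negPn/eqP c1] := boolP (size c != 1).
  have := congr1 (evalx a) e; rewrite !rmorphM /= evalxC (rootP ca) mul0r.
  move/esym/eqP; rewrite mulf_eq0 (negbTE (pg a)) orbF.
  move=> /eqP /evalx_eq0_factor [w' def_w].
  have [c' def_c] := factor_theorem _ _ ca.
  have c'0 : c' != 0 by apply: contraNneq c0 => c'0; rewrite def_c c'0 mul0r.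
  apply: (IH c' A w') => //.
    by move: le_cn; rewrite def_c size_mul ?polyXsubC_eq0 // size_XsubC addn2.
  apply: (mulfI (x := ('X - a%:P)%:P)); first by rewrite polyC_eq0 polyXsubC_eq0.
  by rewrite mulrA -rmorphM /= [_ * c']mulrC -def_c e def_w mulrA.
have def_c : c = (c`_0)%:P by apply/size1_polyC; rewrite c1.
have c00 : c`_0 != 0 by apply: contraNneq c0 => c00; rewrite def_c c00.
exists ((c`_0)^-1%:P%:P * w).
by rewrite -mulrA -e mulrA {2}def_c -!rmorphM /= mulVf // !rmorph1 mul1r.
Qed.

Lemma primitive_part g : g != 0 ->
  exists e g', [/\ e != 0, g = e%:P * g', primitive g' & size g' = size g].
Proof.
have [n] := ubnP (size (lead_coef g)); elim: n g => // n IH g.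
rewrite ltnS => le_gn g0.
have [pg|/not_all_ex_not [a /negP /negPn /eqP /evalx_eq0_factor [g' def_g]]] :=
  classic (primitive g).
  by exists 1, g; rewrite mul1r oner_neq0.
have g'0 : g' != 0 by apply: contraNneq g0 => g'0; rewrite def_g g'0 mulr0.
have [|e [h [e0 def_g' ph sh]]] := IH g' _ g'0.
  move: le_gn; rewrite def_g lead_coefM lead_coefC.
  by rewrite size_mul ?polyXsubC_eq0 ?lead_coef_eq0 // size_XsubC.
exists (('X - a%:P) * e), h; split => //.
- by rewrite mulf_neq0 ?polyXsubC_eq0.
- by rewrite def_g def_g' rmorphM mulrA.
- by rewrite sh def_g mul_polyC size_scale // polyXsubC_eq0.
Qed.

Lemma resultant_eq0_factor A B : A != 0 -> B != 0 -> resultant A B = 0 ->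
  exists g A' B', [/\ (1 < size g)%N, A = A' * g & B = B' * g].
Proof.
move=> A0 B0 /eqP; rewrite resultant_eq0 => sg.
have g0 : gcdp A B != 0 by rewrite -size_poly_eq0 -lt0n (ltn_trans _ sg).
have [e [g [e0 def_gcd pg sg']]] := primitive_part g0.
have [[c w] /= c0 def_A] := Pdiv.Idomain.dvdpP _ _ (dvdp_gcdl A B).
have [[c' w'] /= c'0 def_B] := Pdiv.Idomain.dvdpP _ _ (dvdp_gcdr A B).
rewrite def_gcd mulrA -mul_polyC in def_A.
rewrite def_gcd mulrA -mul_polyC in def_B.
have [A' ->] := primitive_dvd c0 pg def_A.
have [B' ->] := primitive_dvd c'0 pg def_B.
by exists g, A', B'; rewrite sg'.
Qed.

End PolyOverPoly.

Section TotalDegree.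

Variable R : idomainType.
Implicit Types (P Q : {poly {poly R}}).

(* Row [i] of [M] has degree at most [r i - j] in column [j], so every term
   of the Leibniz expansion has degree at most [\sum_i r i - \sum_j j]. *)
Lemma size_det_le N (M : 'M[{poly R}]_N) (r : 'I_N -> nat) (e : nat) :
  (forall i j, M i j != 0 -> ((size (M i j)).-1 + j <= r i)%N) ->
  (\sum_i r i <= e + \sum_(j < N) j)%N -> (size (\det M) <= e.+1)%N.
Proof.
move=> le_Mr le_re; rewrite /determinant (leq_trans (size_sum _ _ _)) //.
apply/bigmax_leqP => s _; rewrite size_Msign.
have [/eqP ->|/prodf_neq0 nzM] := boolP (\prod_i M i (s i) == 0).
  by rewrite size_poly0.
apply: (leq_trans (size_poly_prod_leq _ _)); rewrite cardT size_enum_ord.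
have le_Ms i : (size (M i (s i)) + s i <= (r i).+1)%N.
  have := le_Mr i (s i) (nzM i isT); have := nzM i isT.
  by rewrite -size_poly_gt0; case: (size _) => //= k _; lia.
have : (\sum_i (size (M i (s i)) + s i) <= \sum_i (r i).+1)%N.
  by apply: leq_sum => i _; exact: le_Ms.
rewrite big_split /=.
have -> : (\sum_i (s i : nat) = \sum_(j < N) (j : nat))%N.
  by rewrite [RHS](reindex_inj (@perm_inj _ s)).
have -> : (\sum_(i < N) (r i).+1 = \sum_i r i + N)%N.
  rewrite (eq_bigr (fun i => r i + 1)%N) => [|i _]; last by rewrite addn1.
  by rewrite big_split /= sum_nat_const card_ord muln1.
move: le_re; set a := (\sum_(i < N) size _)%N; set b := (\sum_(j < N) _)%N.
set c := (\sum_i r i)%N; lia.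
Qed.

(* The outer variable of [{poly {poly R}}] is [y], the inner one [x]: the
   coefficient of [x^j y^i] in [P] is [P`_i`_j]. *)
Definition tdeg_le k P := forall i j, (k < i + j)%N -> P`_i`_j = 0.

Lemma tdeg_le_coef k P i :
  tdeg_le k P -> P`_i != 0 -> ((size (P`_i)%R).-1 + i <= k)%N.
Proof.
move=> leP nzPi; rewrite leqNgt; apply/negP => lt_k.
by move: nzPi; rewrite -lead_coef_eq0 /lead_coef leP ?eqxx //; lia.
Qed.

Lemma tdeg_le_size k P : tdeg_le k P -> (size P <= k.+1)%N.
Proof.
move=> leP; have [->|P0] := eqVneq P 0; first by rewrite size_poly0.
have := tdeg_le_coef (i := (size P).-1) leP.
rewrite -/(lead_coef P) lead_coef_eq0 => /(_ P0).
have : (0 < size P)%N by rewrite size_poly_gt0.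
lia.
Qed.

Lemma tdeg_le_size_coef k P i : tdeg_le k P -> (size (P`_i)%R <= (k - i).+1)%N.
Proof.
move=> leP; have [->|nzPi] := eqVneq P`_i 0; first by rewrite size_poly0.
by have := tdeg_le_coef leP nzPi; lia.
Qed.

Lemma tdeg_leW k k' P : (k <= k')%N -> tdeg_le k P -> tdeg_le k' P.
Proof. by move=> le_kk' leP i j lt_k'; apply: leP; lia. Qed.

Lemma tdeg_leC k (c : R) : tdeg_le k c%:P%:P.
Proof.
move=> i j lt_k; rewrite coefC; case: eqP => [i0|_]; last by rewrite coef0.
by rewrite coefC; case: eqP => // j0; lia.
Qed.

Lemma tdeg_leD k P Q : tdeg_le k P -> tdeg_le k Q -> tdeg_le k (P + Q).
Proof. by move=> leP leQ i j lt_k; rewrite !coefD leP // leQ // addr0. Qed.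

Lemma tdeg_le_sum I (r : seq I) (Pr : pred I) (G : I -> {poly {poly R}}) k :
  (forall i, Pr i -> tdeg_le k (G i)) -> tdeg_le k (\sum_(i <- r | Pr i) G i).
Proof.
move=> leG; apply: (big_ind (tdeg_le k)) => //; last exact: tdeg_leD.
by move=> i j _; rewrite !coef0.
Qed.

Lemma tdeg_leM k1 k2 P Q :
  tdeg_le k1 P -> tdeg_le k2 Q -> tdeg_le (k1 + k2) (P * Q).
Proof.
move=> leP leQ i j lt_k; rewrite coefM coef_sum big1 // => a _.
rewrite coefM big1 // => b _.
have := ltn_ord a; have := ltn_ord b; case: (leqP (a + b) k1) => lt_ab lt_b lt_a.
  by rewrite (leQ (i - a)%N (j - b)%N) ?mulr0 //; lia.
by rewrite leP ?mul0r.
Qed.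

Lemma tdeg_leXn k P n : tdeg_le k P -> tdeg_le (k * n) (P ^+ n).
Proof.
move=> leP; elim: n => [|n IH]; first by rewrite expr0 muln0 -!polyC1; exact: tdeg_leC.
by rewrite exprS mulnS; apply: tdeg_leM.
Qed.

Lemma tdeg_le_polyX : tdeg_le 1 ('X : {poly {poly R}}).
Proof.
move=> i j lt_1; rewrite coefX; case: eqP => [i1|_]; last by rewrite coef0.
by rewrite coefC; case: eqP => // j0; lia.
Qed.

Lemma tdeg_le_polyCX : tdeg_le 1 ('X : {poly R})%:P.
Proof.
move=> i j lt_1; rewrite coefC; case: eqP => [i0|_]; last by rewrite coef0.
by rewrite coefX; case: eqP => // j1; lia.
Qed.

Lemma size_resultant_le P Q m n : tdeg_le m P -> tdeg_le n Q ->
  (size (resultant P Q) <= (m * n).+1)%N.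
Proof.
move=> leP leQ.
have le_dP : ((size P).-1 <= m)%N by have := tdeg_le_size leP; lia.
have le_dQ : ((size Q).-1 <= n)%N by have := tdeg_le_size leQ; lia.
(* Weight [m + k] for row [k] of the [P] block and [n + k] for row [k] of the
   [Q] block of the Sylvester matrix. *)
pose r (i : 'I_((size Q).-1 + (size P).-1)) :=
  match split i with inl k => (m + k)%N | inr k => (n + k)%N end.
apply: (size_det_le (r := r)).
  move=> i j; rewrite Sylvester_mxE /r; case: (split i) => k /=; case: leqP => hk;
    rewrite ?mulr0n ?eqxx // mulr1n => nz.
    by rewrite -{2}(subnK hk) addnA leq_add2r; exact: tdeg_le_coef leP nz.
  by rewrite -{2}(subnK hk) addnA leq_add2r; exact: tdeg_le_coef leQ nz.
rewrite !big_split_ord /=.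
under eq_bigr do rewrite /r (unsplitK (inl _)).
under [X in (_ + X <= _)%N]eq_bigr do rewrite /r (unsplitK (inr _)).
rewrite /= !big_split /= !sum_nat_const !card_ord.
set S1 := (\sum_(i < _) (i : nat))%N; set S2 := (\sum_(i < _) (i : nat))%N.
move: le_dP le_dQ S1 S2; move: (size P).-1 (size Q).-1 => a b le_am le_bn S1 S2.
rewrite -(subnK le_am) -(subnK le_bn); move: (m - a)%N (n - b)%N => u v.
nia.
Qed.

End TotalDegree.

Lemma exists_nonroot (R : numDomainType) (q : {poly R}) :
  q != 0 -> exists a, q.[a] != 0.
Proof.
move=> q0; apply: NNPP => noa.
have allroot x : root q x by apply/negPn/negP => qx; apply: noa; exists x.
pose s := [seq (i%:R : R) | i <- iota 0 (size q)].
have us : uniq s.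
  by rewrite map_inj_uniq ?iota_uniq // => i j /eqP; rewrite eqr_nat => /eqP.
have : all (root q) s by apply/allP => x _; exact: allroot.
by move/(max_poly_roots q0)/(_ us); rewrite size_map size_iota ltnn.
Qed.

Lemma exists_notin (R : numDomainType) (L : seq R) : exists c, c \notin L.
Proof.
have q0 : \prod_(x <- L) ('X - x%:P) != 0.
  by rewrite prodf_seq_neq0; apply/allP => x _; rewrite polyXsubC_eq0.
have [a qa] := exists_nonroot q0; exists a; apply: contra qa.
by rewrite -root_prod_XsubC.
Qed.

Lemma uniq_roots_size_le (R : idomainType) (c : {poly R}) (X : seq R) k :
  c != 0 -> (size c <= k.+1)%N -> uniq X -> {in X, forall x, root c x} ->
  (size X <= k)%N.
Proof.
by move=> c0 sc uX /allP Xc; rewrite -ltnS (leq_trans (max_poly_roots c0 Xc uX)).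
Qed.

Lemma root_resultant (R : idomainType) (P Q : {poly {poly R}}) a b :
  (1 < size P)%N -> (1 < size Q)%N ->
  (evalx a P).[b] = 0 -> (evalx a Q).[b] = 0 -> root (resultant P Q) a.
Proof.
move=> sP sQ Pab Qab; apply/rootP; have [[u v] /= _ def_res] := resultant_in_ideal sP sQ.
have := congr1 (fun r => (evalx a r).[b]) def_res.
rewrite /= map_polyC hornerC /= horner_evalE => ->.
by rewrite rmorphD rmorphM rmorphM /= hornerD !hornerM Pab Qab !mulr0 addr0.
Qed.

Lemma common_xroots_size_le (F : closedFieldType) (P Q : {poly {poly F}}) m n
    (X : seq F) :
  P != 0 -> Q != 0 -> (0 < m)%N -> (0 < n)%N -> tdeg_le m P -> tdeg_le n Q ->
  (forall g P' Q' : {poly {poly F}},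
     (1 < size g)%N -> P = P' * g -> Q = Q' * g -> False) ->
  uniq X -> (forall x, x \in X -> exists b, (evalx x P).[b] = 0 /\ (evalx x Q).[b] = 0) ->
  (size X <= m * n)%N.
Proof.
move=> P0 Q0 m0 n0 tP tQ cPQ uX XPQ.
suff [c [c0 sc Xc]] : exists c : {poly F},
    [/\ c != 0, (size c <= (m * n).+1)%N & {in X, forall x, root c x}].
  exact: uniq_roots_size_le c0 sc uX Xc.
have [sP|sP] := leqP (size P) 1.
  exists P`_0; split.
  - by apply: contraNneq P0 => c0; rewrite (size1_polyC sP) c0.
  - by rewrite (leq_trans (tdeg_le_size_coef 0 tP)) // subn0 ltnS leq_pmulr.
  - by move=> x /XPQ [b [+ _]]; rewrite {1}(size1_polyC sP) evalxC hornerC => /rootP.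
have [sQ|sQ] := leqP (size Q) 1.
  exists Q`_0; split.
  - by apply: contraNneq Q0 => c0; rewrite (size1_polyC sQ) c0.
  - by rewrite (leq_trans (tdeg_le_size_coef 0 tQ)) // subn0 ltnS leq_pmull.
  - by move=> x /XPQ [b [_]]; rewrite {1}(size1_polyC sQ) evalxC hornerC => /rootP.
exists (resultant P Q); split.
- apply/eqP => /(resultant_eq0_factor P0 Q0) [g [P' [Q' [sg defP defQ]]]].
  exact: cPQ sg defP defQ.
- exact: size_resultant_le.
- by move=> x /XPQ [b [Pb Qb]]; exact: root_resultant sP sQ Pb Qb.
Qed.

Section MmapMorphism.

Variables (n : nat) (R : nzRingType) (S T : comNzRingType).

Lemma rmorph_mmap (f : R -> S) (h : 'I_n -> S) (G : {rmorphism S -> T}) p :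
  G (mmap f h p) = mmap (G \o f) (G \o h) p.
Proof.
rewrite /mmap rmorph_sum; apply: eq_bigr => m _.
rewrite rmorphM /mmap1 rmorph_prod; congr (_ * _).
by apply: eq_bigr => i _; rewrite rmorphXn.
Qed.

Lemma eq_mmap (f1 f2 : R -> S) (h1 h2 : 'I_n -> S) p :
  f1 =1 f2 -> h1 =1 h2 -> mmap f1 h1 p = mmap f2 h2 p.
Proof.
move=> ef eh; rewrite /mmap; apply: eq_bigr => m _; rewrite ef /mmap1.
by congr (_ * _); apply: eq_bigr => i _; rewrite eh.
Qed.

End MmapMorphism.

Definition shear_var (t : CC) (i : 'I_2) : {poly {poly CC}} :=
  if i == 0 :> nat then ('X)%:P + t%:P%:P * 'X else 'X.

(* [shear t p] is [p(x + t y, y)], as a polynomial in [y] over [CC[x]];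
   [unshear t] is its inverse [g |-> g(X_0 - t X_1, X_1)]. *)
Local Notation shear t := (mmap (polyC \o polyC) (shear_var t)).
Local Notation unshear t := (horner_eval 'X_1
  \o map_poly (horner_eval ('X_0 - t *: 'X_1) \o map_poly (@mpolyC 2 CC))).

Lemma tdeg_le_shear t p : tdeg_le (tdeg p) (shear t p).
Proof.
have le_var i : tdeg_le 1 (shear_var t i).
  rewrite /shear_var; case: eqP => _; last exact: tdeg_le_polyX.
  apply: tdeg_leD; first exact: tdeg_le_polyCX.
  exact: tdeg_leW (tdeg_leM (tdeg_leC (k := 0) t) (tdeg_le_polyX _)).
rewrite /mmap big_seq; apply: tdeg_le_sum => m /msize_mdeg_lt.
rewrite mdegE big_ord_recr big_ord1 /mmap1 big_ord_recr big_ord1 /= => lt_m.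
apply: tdeg_leW (tdeg_leM (tdeg_leC (k := 0) _)
  (tdeg_leM (tdeg_leXn (le_var _)) (tdeg_leXn (le_var _)))).
by move: lt_m; rewrite /tdeg; case: (msize p) => /= [|s]; lia.
Qed.

Lemma ev_shear t p a b : (evalx a (shear t p)).[b] = ev p (a + t * b, b).
Proof.
transitivity ((horner_eval b \o evalx a) (shear t p)); first by [].
rewrite rmorph_mmap /ev /meval; apply: eq_mmap => [c|[[|[|i]] lt_i2]] //=.
- by rewrite !map_polyC /= !horner_evalE !hornerC.
- by rewrite rmorphD rmorphM /= !map_polyC map_polyX /= !horner_evalE !hornerE.
- by rewrite map_polyX /= horner_evalE hornerX.
Qed.

Lemma shearK t p : unshear t (shear t p) = p.
Proof.
rewrite rmorph_mmap -[RHS]comp_mpoly_id /comp_mpoly.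
apply: eq_mmap => [c|[[|[|i]] lt_i2]] /=.
- by rewrite !map_polyC /= !horner_evalE !hornerC map_polyC hornerC.
- rewrite tnth_mktuple rmorphD rmorphM /= !map_polyC map_polyX /= !horner_evalE.
  rewrite !hornerE map_polyX map_polyC !hornerE -mul_mpolyC subrK.
  by congr 'X_ _; apply: val_inj.
- rewrite tnth_mktuple map_polyX /= horner_evalE hornerX.
  by congr 'X_ _; apply: val_inj.
- by [].
Qed.

Lemma ev_unshear t g u v : ev (unshear t g) (u, v) = (evalx (u - t * v) g).[v].
Proof.
rewrite /ev /= horner_evalE.
set w := (fun i : 'I_2 => _).
rewrite -[meval w _](horner_map (meval w)) -map_poly_comp.
congr (_.[_]); last exact: mevalXU.
apply: eq_map_poly => c /=.
rewrite !horner_evalE -[meval w _](horner_map (meval w)) -map_poly_comp.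
congr (_.[_]); first by rewrite map_poly_id // => c' _ /=; rewrite mevalC.
change (meval w ('X_0 - t *: 'X_1 : {mpoly CC[2]}) = u - t * v).
by rewrite mevalB mevalZ !mevalXU.
Qed.

(* On the line [x = a + t y], where [a] is not a root of [lead_coef g],
   [unshear t g] restricts to a nonconstant polynomial in [y]. *)
Lemma nonconst_unshear t (g : {poly {poly CC}}) :
  (1 < size g)%N -> nonconst (unshear t g).
Proof.
move=> sg c gc.
have g0 : g != 0 by rewrite -size_poly_gt0 (ltn_trans _ sg).
have [a la] : exists a, (lead_coef g).[a] != 0.
  by apply: exists_nonroot; rewrite lead_coef_eq0.
have sga : size (evalx a g) = size g by rewrite size_map_poly_id0 // horner_evalE.
have [r gr] : exists r, root (evalx a g) r by apply/closed_rootP; rewrite sga; lia.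
have [s gs] : exists s, (evalx a g).[s] != 0.
  by apply: exists_nonroot; rewrite -size_poly_gt0 sga (ltn_trans _ sg).
have := ev_unshear t g (a + t * r) r; have := ev_unshear t g (a + t * s) s.
rewrite !addrK gc /ev !mevalC => gsc grc.
by move: gs; rewrite -gsc grc (rootP gr) eqxx.
Qed.

Lemma exists_separating_shear (P : seq pt) : uniq P ->
  exists t : CC, uniq [seq z.1 - t * z.2 | z <- P].
Proof.
move=> uP.
have [t tP] := exists_notin [seq (z.1 - w.1) / (z.2 - w.2) | z <- P, w <- P].
exists t; rewrite map_inj_in_uniq // => z w zP wP /= e.
have [e2|ne2] := eqVneq z.2 w.2.
  move: e; rewrite e2 => /addIr e1.
  by case: z w e1 e2 {zP wP} => [z1 z2] [w1 w2] /= -> ->.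
suff def_t : t = (z.1 - w.1) / (z.2 - w.2).
  by move: tP; rewrite def_t (allpairs_f (fun z w : pt => _) zP wP).
have -> : z.1 - w.1 = t * (z.2 - w.2) by rewrite -[z.1](subrK (t * z.2)) e; ring.
by rewrite mulfK // subr_eq0.
Qed.

Implicit Types (p q A B D E : {mpoly CC[2]}).

Definition dvdmp D A := exists A', A = A' * D.

Definition coprimemp A B := forall E, nonconst E -> dvdmp E A -> dvdmp E B -> False.

Lemma dvdmp_refl D : dvdmp D D.
Proof. by exists 1; rewrite mul1r. Qed.

Lemma dvdmp_trans D E A : dvdmp D E -> dvdmp E A -> dvdmp D A.
Proof. by move=> [E' ->] [A' ->]; exists (A' * E'); rewrite mulrA. Qed.

Lemma evM p q z : ev (p * q) z = ev p z * ev q z.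
Proof. exact: mevalM. Qed.

Lemma ev_mul_eq0 p q z : ev q z != 0 -> ev (p * q) z = 0 -> ev p z = 0.
Proof. by move=> qz /eqP; rewrite evM mulf_eq0 (negbTE qz) orbF => /eqP. Qed.

Lemma tdegM p q : p != 0 -> q != 0 -> tdeg (p * q) = (tdeg p + tdeg q)%N.
Proof.
move=> p0 q0; rewrite /tdeg msizeM //.
move: (msize_poly_eq0 p) (msize_poly_eq0 q); rewrite (negbTE p0) (negbTE q0).
by case: (msize p) => // a; case: (msize q) => // b _ _; lia.
Qed.

Lemma tdeg_eq0 p : tdeg p = 0%N -> p = (p@_0)%:MP.
Proof. by move=> tp0; apply: msize1_polyC; move: tp0; rewrite /tdeg; lia. Qed.

Lemma nonconst_tdeg p : nonconst p <-> (0 < tdeg p)%N.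
Proof.
split => [ncp|tp c def_p]; last by move: tp; rewrite def_p /tdeg msizeC; case: (_ != 0).
by rewrite lt0n; apply/eqP => /tdeg_eq0; exact: ncp.
Qed.

Lemma nonconst_neq0 p : nonconst p -> p != 0.
Proof. by move=> ncp; apply/eqP => p0; apply: (ncp 0); rewrite p0 mpolyC0. Qed.

Lemma ev_tdeg0 p z : p != 0 -> tdeg p = 0%N -> ev p z != 0.
Proof. by move=> + /tdeg_eq0 def_p; rewrite def_p /ev mevalC mpolyC_eq0. Qed.

Lemma tdeg_gt0_root p z : p != 0 -> ev p z = 0 -> (0 < tdeg p)%N.
Proof.
by move=> p0 pz; rewrite lt0n; apply/eqP => /(ev_tdeg0 z p0); rewrite pz eqxx.
Qed.

Lemma dvdmp_tdeg D A : A != 0 -> dvdmp D A -> D != 0 /\ (tdeg D <= tdeg A)%N.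
Proof.
move=> A0 [A' def_A].
have A'0 : A' != 0 by apply: contraNneq A0 => A'0; rewrite def_A A'0 mul0r.
have D0 : D != 0 by apply: contraNneq A0 => D0; rewrite def_A D0 mulr0.
by rewrite def_A tdegM // leq_addl.
Qed.

(* After a shear separating the points of [P], the resultant in [y] of the
   two polynomials vanishes at the [size P] distinct abscissas of their
   common zeros. *)
Lemma weak_bezout A B m n (P : seq pt) : A != 0 -> B != 0 ->
  (tdeg A <= m)%N -> (tdeg B <= n)%N -> coprimemp A B -> uniq P ->
  (forall z, z \in P -> ev A z = 0 /\ ev B z = 0) -> (size P <= m * n)%N.
Proof.
move=> A0 B0 tA tB cAB uP PAB.
have [->//|[z0 z0P]] : P = [::] \/ exists z, z \in P.
  by case: (P) => [|z P']; [left | right; exists z; rewrite mem_head].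
have [t uX] := exists_separating_shear uP.
have shear_neq0 p : p != 0 -> shear t p != 0.
  by move=> p0; apply: contraNneq p0 => pt0; rewrite -(shearK t p) pt0 rmorph0.
rewrite -(size_map (fun z : pt => z.1 - t * z.2)).
apply: (common_xroots_size_le (P := shear t A) (Q := shear t B)) => //.
- exact: shear_neq0.
- exact: shear_neq0.
- exact: leq_trans (tdeg_gt0_root A0 (PAB z0 z0P).1) tA.
- exact: leq_trans (tdeg_gt0_root B0 (PAB z0 z0P).2) tB.
- exact: tdeg_leW tA (tdeg_le_shear t (p := A)).
- exact: tdeg_leW tB (tdeg_le_shear t (p := B)).
- move=> g A' B' sg defA defB; apply: (cAB (unshear t g)); first exact: nonconst_unshear.
    by exists (unshear t A'); rewrite -(shearK t A) defA rmorphM.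
  by exists (unshear t B'); rewrite -(shearK t B) defB rmorphM.
- move=> _ /mapP [z zP ->]; exists z.2; rewrite !ev_shear subrK.
  by case: z zP => z1 z2 /PAB.
Qed.

Implicit Types (G : {mpoly CC[2]} -> Prop).

Lemma ev_XsubC (c : CC) z : ev ('X_0 - c%:MP) z = z.1 - c.
Proof. by rewrite /ev mevalB mevalXU mevalC. Qed.

Lemma exists_curve_through (I : seq pt) : I != [::] ->
  exists p, nonconst p /\ forall z, z \in I -> ev p z = 0.
Proof.
move=> I0; have [z0 z0I] : exists z, z \in I.
  by case: I I0 => [//|z I'] _; exists z; rewrite mem_head.
pose p := \prod_(z <- I) ('X_0 - (z.1)%:MP : {mpoly CC[2]}).
have evp w : ev p w = \prod_(z <- I) (w.1 - z.1).
  by rewrite /ev rmorph_prod; apply: eq_bigr => z _; exact: ev_XsubC.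
have pI z : z \in I -> ev p z = 0.
  move=> zI; apply/eqP; rewrite evp prodf_seq_eq0.
  by apply/hasP; exists z => //=; rewrite subrr eqxx.
exists p; split => // c def_p.
have [x xI] := exists_notin [seq z.1 | z <- I].
have : ev p (x, 0) != 0.
  rewrite evp prodf_seq_neq0; apply/allP => z zI /=; rewrite subr_eq0.
  by apply: contraNneq xI => ->; apply: map_f.
by move: (pI z0 z0I); rewrite def_p /ev !mevalC => ->; rewrite eqxx.
Qed.

Definition cdiv G D := forall B, G B -> dvdmp D B.

Definition max_cdiv G D := cdiv G D /\ forall E, nonconst E -> ~ cdiv G (E * D).

Lemma exists_max_nat (Q : nat -> Prop) N : (exists k, Q k) ->
  (forall k, Q k -> (k <= N)%N) -> exists k, Q k /\ forall j, Q j -> (j <= k)%N.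
Proof.
elim: N => [|N IH] [k Qk] leQN.
  by exists k; split => // j /leQN; have := leQN k Qk; lia.
have [QN|nQN] := classic (Q N.+1); first by exists N.+1.
apply: IH; first by exists k.
move=> j Qj; have := leQN j Qj; rewrite leq_eqVlt => /orP [/eqP ej|//].
by move: Qj; rewrite ej.
Qed.

Lemma exists_max_cdiv G A : G A -> A != 0 -> exists D, D != 0 /\ max_cdiv G D.
Proof.
move=> GA A0; pose Q k := exists D, cdiv G D /\ tdeg D = k.
have Q0 : Q 0%N.
  exists 1; split; first by move=> B _; exists B; rewrite mulr1.
  by rewrite -mpolyC1 /tdeg msizeC oner_neq0.
have leQ k : Q k -> (k <= tdeg A)%N.
  by move=> [D [cD <-]]; case: (dvdmp_tdeg A0 (cD A GA)).
have [k [[D [cD tD]] maxk]] := exists_max_nat (ex_intro _ _ Q0) leQ.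
have [D0 _] := dvdmp_tdeg A0 (cD A GA).
exists D; split => //; split => // E /[dup] /nonconst_tdeg tE /nonconst_neq0 E0 cED.
have := maxk _ (ex_intro _ _ (conj cED erefl)).
by rewrite tdegM // tD; lia.
Qed.

(* Split the common zeros of [A] and [G] along a maximal common divisor [D]
   of [A] and some [B] in [G] with [A] not dividing [B]: those on [D] are
   counted by induction ([tdeg D < tdeg A]), those off [D] are common zeros
   of the coprime cofactors, counted by [weak_bezout]. *)
Lemma common_zeros_size_le a b A G (P : seq pt) :
  A != 0 -> (tdeg A <= a)%N -> (forall B, G B -> B != 0 /\ (tdeg B <= b)%N) ->
  (forall E, nonconst E -> dvdmp E A -> ~ cdiv G E) -> uniq P ->
  (forall z, z \in P -> ev A z = 0 /\ forall B, G B -> ev B z = 0) ->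
  (size P <= a * b)%N.
Proof.
elim/ltn_ind: a A P => a IH A P A0 tA GB ncAG uP PAG.
have [tA0|tA_gt0] := posnP (tdeg A).
  case: P uP PAG => [//|z P] _ /(_ z (mem_head _ _)) [Az _].
  by have := ev_tdeg0 z A0 tA0; rewrite Az eqxx.
have [B [GB' nAB]] : exists B, G B /\ ~ dvdmp A B.
  apply: NNPP => nB; apply: (ncAG A) => [||B GB']; first exact/nonconst_tdeg.
    exact: dvdmp_refl.
  by apply: NNPP => nAB; apply: nB; exists B.
have [B0 tB] := GB B GB'.
have [D [D0 [cD maxD]]] :=
  exists_max_cdiv (G := fun X => X = A \/ X = B) (or_introl erefl) A0.
have [A' defA] := cD A (or_introl erefl); have [B' defB] := cD B (or_intror erefl).
have A'0 : A' != 0 by apply: contraNneq A0 => A'0; rewrite defA A'0 mul0r.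
have B'0 : B' != 0 by apply: contraNneq B0 => B'0; rewrite defB B'0 mul0r.
have tA'_gt0 : (0 < tdeg A')%N.
  apply/nonconst_tdeg => c defA'; apply: nAB; exists (B' * c^-1%:MP).
  have c0 : c != 0 by apply: contraNneq A'0 => c0; rewrite defA' c0 mpolyC0.
  by rewrite defB defA defA' mulrA -[B' * _ * _]mulrA -mpolyCM mulVf ?mpolyC1 ?mulr1.
have on_D : (size [seq z <- P | ev D z == 0%R] <= tdeg D * b)%N.
  apply: (IH (tdeg D) _ D) => //; first by move: tA; rewrite defA tdegM //; lia.
  - move=> E ncE dE; apply: (ncAG E ncE).
    exact: dvdmp_trans dE (cD A (or_introl erefl)).
  - exact: filter_uniq.
  - by move=> z; rewrite mem_filter => /andP [/eqP Dz /PAG [_]].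
have off_D : (size [seq z <- P | ev D z != 0%R] <= tdeg A' * tdeg B')%N.
  apply: (weak_bezout (A := A') (B := B')) => //.
  - move=> E ncE [A'' defA'] [B'' defB']; apply: (maxD E ncE) => X [->|->].
      by exists A''; rewrite defA defA' mulrA.
    by exists B''; rewrite defB defB' mulrA.
  - exact: filter_uniq.
  - move=> z; rewrite mem_filter => /andP [Dz /PAG [Az /(_ B GB') Bz]].
    by split; apply: ev_mul_eq0 Dz _; rewrite -?defA -?defB.
rewrite -(count_predC (fun z => ev D z == 0)) -!size_filter.
apply: leq_trans (leq_add on_D off_D) _.
move: tA tB; rewrite defA defB !tdegM //.
by move: (tdeg D) (tdeg A') (tdeg B') => k a' b'; nia.
Qed.

Lemma zeros_off_max_cdiv d A G D (I : seq pt) : G A ->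
  (forall B, G B -> B != 0 /\ (tdeg B <= d)%N) -> max_cdiv G D -> uniq I ->
  (forall z, z \in I -> forall B, G B -> ev B z = 0) ->
  (size [seq z <- I | ev D z != 0%R] <= (d - tdeg D) * (d - tdeg D))%N.
Proof.
move=> GA GB [cD maxD] uI IG.
pose Q B' := exists2 B, G B & B = B' * D.
have QB B' : Q B' -> B' != 0 /\ (tdeg B' <= d - tdeg D)%N.
  move=> [B /GB [B0 tB] defB]; have [B'0 D0] : B' != 0 /\ D != 0.
    by split; apply: contraNneq B0 => e0; rewrite defB e0 (mul0r, mulr0).
  by split=> //; move: tB; rewrite defB tdegM //; lia.
have [A' defA] := cD A GA.
have [A'0 tA'] := QB A' (ex_intro2 _ _ A GA defA).
apply: (common_zeros_size_le (A := A') (G := Q)) => //.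
- move=> E ncE _ cQE; apply: (maxD E ncE) => B GB'.
  have [B' defB] := cD B GB'; have [B'' defB'] := cQE B' (ex_intro2 _ _ B GB' defB).
  by exists B''; rewrite defB defB' mulrA.
- exact: filter_uniq.
- move=> z; rewrite mem_filter => /andP [Dz /IG GBz].
  split; first by apply: ev_mul_eq0 Dz _; rewrite -defA GBz.
  by move=> B' [B GB' defB]; apply: ev_mul_eq0 Dz _; rewrite -defB GBz.
Qed.

(* A constant [D] would leave all of [I] off its zero set, and
   [zeros_off_max_cdiv] would give [size I <= d^2]. *)
Lemma max_cdiv_zeros_count d A G D (I : seq pt) : G A ->
  (forall B, G B -> B != 0 /\ (tdeg B <= d)%N) -> max_cdiv G D -> uniq I ->
  (forall z, z \in I -> forall B, G B -> ev B z = 0) -> (d ^ 2 < size I)%N ->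
  (0 < tdeg D)%N /\ (size I <= size [seq z <- I | ev D z == 0%R] + (d - 1) * (d - 1))%N.
Proof.
move=> GA GB maxD uI IG ltI.
have off := zeros_off_max_cdiv GA GB maxD uI IG.
have [A0 tA] := GB A GA.
have [_ tDA] := dvdmp_tdeg A0 (maxD.1 A GA).
have tD_gt0 : (0 < tdeg D)%N.
  rewrite lt0n; apply: contraTneq ltI => tD0; rewrite -leqNgt expnS expn1.
  move: off; rewrite tD0 subn0 (eq_in_filter (a2 := predT)) ?filter_predT // => z _.
  exact: ev_tdeg0 (dvdmp_tdeg A0 (maxD.1 A GA)).1 tD0.
split => //; rewrite -(count_predC (fun z => ev D z == 0)) -!size_filter leq_add2l.
by apply: leq_trans off _; apply: leq_mul; lia.
Qed.

Theorem lemma2p3 (d : nat) (S : (pt -> Prop) -> Prop) (I : seq pt) :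
  (forall C, S C -> curve C /\ curve_deg_le C d) ->
  uniq I ->
  (forall z, z \in I -> forall C, S C -> C z) ->
  (d ^ 2 < size I)%N ->
  exists C0 : pt -> Prop,
    curve C0 /\
    (forall z, C0 z -> forall C, S C -> C z) /\
    exists J : seq pt,
      uniq J /\ (forall z, z \in J -> z \in I /\ C0 z) /\
      (size J)%:Z >= (size I)%:Z - (d%:Z - 1) ^+ 2.
Proof.
move=> degS uI IS ltI.
pose F h := [/\ nonconst h, (tdeg h <= d)%N &
  exists2 C, S C & forall z, C z <-> zero_set h z].
have SF C : S C -> exists2 h, F h & forall z, C z <-> zero_set h z.
  move=> SC; have [_ [h [nch [defC th]]]] := degS C SC.
  by exists h => //; split => //; exists C.
have FB h : F h -> h != 0 /\ (tdeg h <= d)%N by case=> /nonconst_neq0.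
have [[C1 /SF [h1 F1 _]]|noS] := classic (exists C, S C); last first.
  have [|p [ncp pI]] := @exists_curve_through I; first by apply: contraTneq ltI => ->.
  exists (zero_set p); split; first by exists p.
  split; first by move=> z _ C SC; case: noS; exists C.
  exists I; do 2!split => //; first by move=> z zI; split => //; exact: pI.
  by rewrite lerBlDr lerDl sqr_ge0.
have [D [D0 maxD]] := exists_max_cdiv F1 (FB h1 F1).1.
have [|tD_gt0 countI] := max_cdiv_zeros_count F1 FB maxD uI _ ltI.
  by move=> z zI h [_ _ [C SC defC]]; apply/defC; exact: IS.
exists (zero_set D); split; first by exists D; split => //; apply/nonconst_tdeg.
split.
  move=> z Dz C /SF [h Fh defC]; have [h' defh] := maxD.1 h Fh.
  by apply/defC; rewrite /zero_set defh evM Dz mulr0.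
exists [seq z <- I | ev D z == 0]; split; first exact: filter_uniq.
split; first by move=> z; rewrite mem_filter => /andP [/eqP].
by move: countI; rewrite expr2; nia.
Qed.
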